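(* Let $c,d>0$ and $g(x)=xF(c,d;c+d;x)$ for $x\in(0,1)$. The function $G(u)=\log g\!\left(\frac{e^u}{1+e^u}\right)$ is concave on $(-\infty,\infty)$ if and only if $\frac1c+\frac1d\ge1$.
   Context: $F(a,b;c;x)$ is the Gaussian hypergeometric function $\sum_{n\ge0}\frac{(a)_n(b)_n}{(c)_n}\frac{x^n}{n!}$ ($|x|<1$), with $(a)_n=a(a+1)\cdots(a+n-1)$, $(a)_0=1$. *)

From Stdlib Require Import Arith Reals ClassicalEpsilon.
Open Scope R_scope.

Fixpoint poch (a : R) (n : nat) : R :=
  match n with
  | O => 1
  | S k => poch a k * (a + INR k)
  end.

Definition hyp_term (a b c x : R) (n : nat) : R :=
  poch a n * poch b n / poch c n * x ^ n / INR (fact n).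

(* F(a,b;c;x) = sum_{n>=0} hyp_term a b c x n (the sum of the series,
   chosen by classical description; meaningful where the series converges,
   e.g. |x| < 1 with c not a nonpositive integer). *)
Definition hyp2F1 (a b c x : R) : R :=
  epsilon (inhabits 0) (fun l => infinite_sum (hyp_term a b c x) l).

Definition concave_on_R (f : R -> R) : Prop :=
  forall x y t : R, 0 <= t <= 1 ->
    t * f x + (1 - t) * f y <= f (t * x + (1 - t) * y).

(* Write [x = e^u / (1 + e^u)], [F = F(c,d;c+d;.)], [E = F(c,d;c+d+1;.)] and
   [q = c d / (c + d)].  Then [G'(u) = (1 - x) (1 + x F'(x) / F(x))], and the
   contiguous relation [(1 - x) F' = q E] turns this into
   [h(x) = 1 - x + q x E(x) / F(x)].  So [G] is concave iff [h] is nonincreasing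
   on (0,1), while [1/c + 1/d >= 1] means [q <= 1].
   If [q <= 1], the numerator of [h'] is a power series whose n-th coefficient is
   [sum_(i+j=n) a_i a_j K(i,j)] with [K(i,j) + K(j,i) <= 0], so [h' <= 0].
   If [q > 1], then [E/F -> 1] at 0 gives [h(x) = 1 + (q - 1) x + o(x)], so [h]
   increases near 0. *)

From Stdlib Require Import Arith Reals Lra Lia Psatz ClassicalEpsilon FunctionalExtensionality.
From Coquelicot Require Import Coquelicot.
Open Scope R_scope.

Lemma CV_radius_bounded_gt (a : nat -> R) (M x : R) :
  (forall n, Rabs (a n) <= M) -> Rabs x < 1 -> Rbar_lt (Rabs x) (CV_radius a).
Proof.
  intros HM Hx.
  set (r := (Rabs x + 1) / 2).
  assert (Hr : 0 <= r < 1) by (unfold r; generalize (Rabs_pos x); lra).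
  assert (Hle : Rbar_le r (CV_radius a)).
  { apply (proj1 (CV_radius_bounded a)). exists M. intro n.
    rewrite Rabs_mult, <- RPow_abs, (Rabs_pos_eq r) by lra.
    assert (r ^ n <= 1) by (rewrite <- (pow1 n); apply pow_incr; lra).
    assert (0 <= r ^ n) by (apply pow_le; lra).
    generalize (HM n) (Rabs_pos (a n)); nra. }
  eapply Rbar_lt_le_trans; [| exact Hle]. simpl. unfold r. lra.
Qed.

Lemma PSeries_nonneg (a : nat -> R) (x : R) :
  (forall n, 0 <= a n) -> 0 <= x -> ex_pseries a x -> 0 <= PSeries a x.
Proof.
  intros Ha Hx Hex. rewrite <- (PSeries_const_0 x). apply Series_le.
  - intro n. assert (0 <= x ^ n) by (apply pow_le; lra).
    generalize (Ha n); nra.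
  - apply ex_pseries_R, Hex.
Qed.

Lemma PSeries_ge_head (a : nat -> R) (x : R) :
  (forall n, 0 <= a n) -> 0 <= x -> Rbar_lt (Rabs x) (CV_radius a) ->
  a 0%nat <= PSeries a x.
Proof.
  intros Ha Hx Hr.
  rewrite (PSeries_decr_1 a x (CV_radius_inside a x Hr)).
  assert (0 <= PSeries (PS_decr_1 a) x).
  { apply PSeries_nonneg; [intro n; apply Ha | exact Hx |].
    apply CV_radius_inside. rewrite CV_radius_decr_1. exact Hr. }
  nra.
Qed.

Lemma PS_incr_1_derive (a : nat -> R) (n : nat) :
  PS_incr_1 (PS_derive a) n = INR n * a n.
Proof. destruct n as [|n]; [simpl; rewrite Rmult_0_l |]; reflexivity. Qed.

Lemma sum_f_R0_ge_term (u : nat -> R) (N k : nat) :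
  (forall i, 0 <= u i) -> (k <= N)%nat -> u k <= sum_f_R0 u N.
Proof.
  intros Hu Hk. induction N as [|N IH]; simpl.
  - replace k with 0%nat by lia. lra.
  - destruct (Nat.eq_dec k (S N)) as [->|Hne].
    + generalize (cond_pos_sum u N Hu); lra.
    + generalize (IH ltac:(lia)) (Hu (S N)); lra.
Qed.

Lemma sum_antidiagonal_nonpos (T : nat -> nat -> R) (n : nat) :
  (forall i j, T i j + T j i <= 0) -> sum_f_R0 (fun k => T k (n - k)%nat) n <= 0.
Proof.
  intro HT.
  assert (Hrev : sum_f_R0 (fun k => T (n - k)%nat k) n =
                 sum_f_R0 (fun k => T k (n - k)%nat) n).
  { rewrite <- sum_f_R0_skip. apply sum_eq. intros k Hk. f_equal. lia. }
  assert (Hsym : sum_f_R0 (fun k => T k (n - k)%nat + T (n - k)%nat k) n <= 0).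
  { rewrite <- (Rmult_0_l (INR (S n))), <- sum_cte. apply sum_Rle. intros; apply HT. }
  rewrite plus_sum, Hrev in Hsym. lra.
Qed.

Lemma is_derive_ge_of_chords (f : R -> R) (u D m r : R) :
  is_derive f u D -> 0 < r ->
  (forall h, 0 < h < r -> m * h <= f (u + h) - f u) -> m <= D.
Proof.
  intros Hf Hr Hm. apply Rnot_lt_le. intro HD.
  destruct (proj1 (is_derive_Reals f u D) Hf (m - D) ltac:(lra)) as [[del Hdel] Hq].
  set (h := Rmin (del / 2) (r / 2)).
  assert (Hh : 0 < h /\ h < del /\ h < r).
  { unfold h. generalize (Rmin_l (del / 2) (r / 2)) (Rmin_r (del / 2) (r / 2)).
    assert (0 < Rmin (del / 2) (r / 2)) by (apply Rmin_glb_lt; lra). lra. }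
  assert (Hquot : m <= (f (u + h) - f u) / h) by (apply Rle_div_r; [lra | apply Hm; lra]).
  specialize (Hq h ltac:(lra) ltac:(simpl; rewrite Rabs_pos_eq; lra)).
  apply Rabs_def2 in Hq. lra.
Qed.

Lemma is_derive_le_of_chords (f : R -> R) (u D m r : R) :
  is_derive f u D -> 0 < r ->
  (forall h, 0 < h < r -> f u - f (u - h) <= m * h) -> D <= m.
Proof.
  intros Hf Hr Hm.
  assert (Hg : is_derive (fun t => f (- t)) (- u) (-1 * D)).
  { apply (is_derive_comp f Ropp); [rewrite Ropp_involutive; exact Hf |].
    auto_derive; [exact I | ring]. }
  enough (- m <= -1 * D) by lra.
  apply (is_derive_ge_of_chords _ (- u) _ _ r Hg Hr). intros h Hh.
  replace (- (- u + h)) with (u - h) by ring. rewrite Ropp_involutive.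
  generalize (Hm h Hh); lra.
Qed.

Lemma concave_on_R_three_points (f : R -> R) (u v w : R) :
  concave_on_R f -> u < w < v -> f u * (v - w) + f v * (w - u) <= f w * (v - u).
Proof.
  intros Hf Huwv.
  set (t := (v - w) / (v - u)).
  assert (Ht : 0 <= t <= 1).
  { unfold t. split; [apply Rdiv_le_0_compat | apply Rle_div_l]; lra. }
  assert (Hc := Hf u v t Ht).
  replace (t * u + (1 - t) * v) with w in Hc by (unfold t; field; lra).
  apply (Rmult_le_compat_r (v - u)) in Hc; [| lra].
  replace ((t * f u + (1 - t) * f v) * (v - u)) with (f u * (v - w) + f v * (w - u))
    in Hc by (unfold t; field; lra).
  exact Hc.
Qed.

Lemma deriv_antitone_of_concave (f : R -> R) (u v du dv : R) :
  concave_on_R f -> is_derive f u du -> is_derive f v dv -> u < v -> dv <= du.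
Proof.
  intros Hf Hu Hv Huv.
  set (m := (f v - f u) / (v - u)).
  assert (Hright : m <= du).
  { apply (is_derive_ge_of_chords f u du m (v - u) Hu); [lra |]. intros h Hh.
    assert (Hchord := concave_on_R_three_points f u v (u + h) Hf ltac:(lra)).
    unfold m. apply Rmult_le_reg_r with (v - u); [lra |].
    replace ((f v - f u) / (v - u) * h * (v - u)) with ((f v - f u) * h) by (field; lra).
    nra. }
  assert (Hleft : dv <= m).
  { apply (is_derive_le_of_chords f v dv m (v - u) Hv); [lra |]. intros h Hh.
    assert (Hchord := concave_on_R_three_points f u v (v - h) Hf ltac:(lra)).
    unfold m. apply Rmult_le_reg_r with (v - u); [lra |].
    replace ((f v - f u) / (v - u) * h * (v - u)) with ((f v - f u) * h) by (field; lra).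
    nra. }
  lra.
Qed.

Lemma concave_on_R_of_deriv_antitone (f f' : R -> R) :
  (forall u, is_derive f u (f' u)) -> (forall u v, u < v -> f' v <= f' u) ->
  concave_on_R f.
Proof.
  intros Hf Hf'.
  assert (Hmvt : forall u v, u < v -> exists w, f v - f u = f' w * (v - u) /\ u < w < v).
  { intros u v Huv. apply MVT_cor2; [exact Huv |]. intros w _. apply is_derive_Reals, Hf. }
  assert (Hlt : forall x y t, x < y -> 0 < t < 1 ->
                t * f x + (1 - t) * f y <= f (t * x + (1 - t) * y)).
  { intros x y t Hxy Ht. set (z := t * x + (1 - t) * y).
    destruct (Hmvt x z ltac:(unfold z; nra)) as [w1 [E1 Hw1]].
    destruct (Hmvt z y ltac:(unfold z; nra)) as [w2 [E2 Hw2]].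
    assert (Hd : f' w2 <= f' w1) by (apply Hf'; lra).
    (* [t f x + (1 - t) f y - f z = t (1 - t) (y - x) (f' w2 - f' w1)] *)
    assert (Hzx : z - x = (1 - t) * (y - x)) by (unfold z; ring).
    assert (Hyz : y - z = t * (y - x)) by (unfold z; ring).
    rewrite Hzx in E1. rewrite Hyz in E2.
    assert (0 <= t * (1 - t) * (y - x)) by (apply Rmult_le_pos; nra).
    nra. }
  intros x y t Ht.
  destruct (Req_dec t 0) as [-> | Ht0].
  { replace (0 * x + (1 - 0) * y) with y by ring. lra. }
  destruct (Req_dec t 1) as [-> | Ht1].
  { replace (1 * x + (1 - 1) * y) with x by ring. lra. }
  destruct (Rtotal_order x y) as [Hxy | [<- | Hyx]].
  - apply Hlt; lra.
  - replace (t * x + (1 - t) * x) with x by ring. lra.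
  - replace (t * x + (1 - t) * y) with ((1 - t) * y + (1 - (1 - t)) * x) by ring.
    generalize (Hlt y x (1 - t) Hyx ltac:(lra)). lra.
Qed.

Lemma rises_near_0 (r : R -> R) (q : R) :
  continuity_pt r 0 -> r 0 = 1 -> 1 < q ->
  exists x y, 0 < x < y /\ y < 1 /\ 1 - x + q * (x * r x) < 1 - y + q * (y * r y).
Proof.
  intros Hr Hr0 Hq.
  set (eta := (q - 1) / (5 * q)).
  assert (Heta : q * eta = (q - 1) / 5) by (unfold eta; field; lra).
  destruct (Hr eta ltac:(unfold eta; apply Rdiv_lt_0_compat; lra)) as [del [Hdel Hnear]].
  assert (Hclose : forall z, 0 < z < del -> 1 - eta < r z < 1 + eta).
  { intros z Hz.
    assert (Hd : Rabs (r z - r 0) < eta).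
    { apply (Hnear z). split; [split; [exact I | lra] |].
      simpl. unfold R_dist. rewrite Rminus_0_r, Rabs_pos_eq; lra. }
    rewrite Hr0 in Hd. apply Rabs_def2 in Hd. lra. }
  set (y := Rmin (del / 2) (1 / 2)).
  assert (Hy : 0 < y /\ y < del /\ y < 1).
  { unfold y. generalize (Rmin_l (del / 2) (1 / 2)) (Rmin_r (del / 2) (1 / 2)).
    assert (0 < Rmin (del / 2) (1 / 2)) by (apply Rmin_glb_lt; lra). lra. }
  exists (y / 4), y.
  split; [lra | split; [lra |]].
  destruct (Hclose y ltac:(lra)) as [Hry _].
  destruct (Hclose (y / 4) ltac:(lra)) as [_ Hrx].
  assert (Hgy : q * y * (1 - eta) < q * (y * r y)).
  { rewrite <- Rmult_assoc. apply Rmult_lt_compat_l; nra. }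
  assert (Hgx : q * (y / 4 * r (y / 4)) < q * (y / 4) * (1 + eta)).
  { rewrite <- Rmult_assoc. apply Rmult_lt_compat_l; nra. }
  (* at [x = y / 4] the difference is at least [y (q - 1) / 2] *)
  replace (q * y * (1 - eta)) with (q * y - y * (q * eta)) in Hgy by ring.
  replace (q * (y / 4) * (1 + eta)) with (q * y / 4 + y / 4 * (q * eta)) in Hgx by field.
  rewrite Heta in Hgy, Hgx. nra.
Qed.

Definition logistic (u : R) : R := exp u / (1 + exp u).

Lemma logistic_bounds (u : R) : 0 < logistic u < 1.
Proof.
  unfold logistic. generalize (exp_pos u); intro.
  split; [apply Rdiv_lt_0_compat | apply Rlt_div_l]; lra.
Qed.

Lemma logistic_lt (u v : R) : u < v -> logistic u < logistic v.
Proof.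
  intro Huv. unfold logistic.
  generalize (exp_pos u) (exp_pos v) (exp_increasing u v Huv); intros.
  apply Rlt_0_minus.
  replace (exp v / (1 + exp v) - exp u / (1 + exp u))
    with ((exp v - exp u) / ((1 + exp u) * (1 + exp v))) by (field; lra).
  apply Rdiv_lt_0_compat; nra.
Qed.

Lemma logistic_lt_inv (u v : R) : logistic u < logistic v -> u < v.
Proof.
  intro H. destruct (Rlt_or_le u v) as [Huv | [Hvu | ->]]; [exact Huv | | lra].
  apply logistic_lt in Hvu. lra.
Qed.

Lemma logistic_logit (x : R) : 0 < x < 1 -> logistic (ln (x / (1 - x))) = x.
Proof.
  intro Hx. unfold logistic. rewrite exp_ln by (apply Rdiv_lt_0_compat; lra).
  field. lra.
Qed.

Lemma poch_pos (a : R) (n : nat) : 0 < a -> 0 < poch a n.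
Proof.
  intro Ha. induction n as [|n IH]; simpl; [lra|].
  generalize (pos_INR n); nra.
Qed.

Lemma poch_shift (a : R) (n : nat) : a * poch (a + 1) n = poch a n * (a + INR n).
Proof.
  induction n as [|n IH]; [simpl; ring |].
  change (poch (a + 1) (S n)) with (poch (a + 1) n * (a + 1 + INR n)).
  change (poch a (S n)) with (poch a n * (a + INR n)).
  rewrite <- Rmult_assoc, IH, S_INR. ring.
Qed.

Definition hypcoef (a b c : R) (n : nat) : R :=
  poch a n * poch b n / poch c n / INR (fact n).

Lemma hyp2F1_PSeries (a b c x : R) :
  Rbar_lt (Rabs x) (CV_radius (hypcoef a b c)) ->
  hyp2F1 a b c x = PSeries (hypcoef a b c) x.
Proof.
  intro Hr.
  assert (Hsum : infinite_sum (hyp_term a b c x) (PSeries (hypcoef a b c) x)).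
  { apply is_series_Reals, (is_series_ext (fun n => hypcoef a b c n * x ^ n)).
    - intro n. change (hypcoef a b c n * x ^ n = hyp_term a b c x n :> R).
      unfold hyp_term, hypcoef, Rdiv. ring.
    - apply is_pseries_R, PSeries_correct, CV_radius_inside, Hr. }
  apply (uniqueness_sum (hyp_term a b c x)); [| exact Hsum].
  unfold hyp2F1. apply epsilon_spec. exists (PSeries (hypcoef a b c) x). exact Hsum.
Qed.

Lemma hypcoef_0 (a b c : R) : hypcoef a b c 0 = 1.
Proof. unfold hypcoef. simpl. field. Qed.

Section Coefficients.
Variables a b c : R.
Hypotheses (ha : 0 < a) (hb : 0 < b) (hc : 0 < c).

Lemma hypcoef_pos (n : nat) : 0 < hypcoef a b c n.
Proof.
  unfold hypcoef. apply Rdiv_lt_0_compat; [apply Rdiv_lt_0_compat |].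
  - apply Rmult_lt_0_compat; apply poch_pos; assumption.
  - apply poch_pos; assumption.
  - apply lt_0_INR, lt_O_fact.
Qed.

Lemma hypcoef_S (n : nat) :
  hypcoef a b c (S n) =
  hypcoef a b c n * ((a + INR n) * (b + INR n) / ((c + INR n) * INR (S n))).
Proof.
  unfold hypcoef. simpl poch. rewrite fact_simpl, mult_INR.
  generalize (poch_pos c n hc) (lt_0_INR _ (lt_O_fact n)) (pos_INR n).
  rewrite S_INR. intros. field. repeat split; lra.
Qed.

(* Once [n >= a b] the ratio of consecutive coefficients is at most [1]. *)
Lemma hypcoef_bounded : a + b <= c -> exists M, forall n, Rabs (hypcoef a b c n) <= M.
Proof.
  intro Habc.
  destruct (INR_unbounded (a * b)) as [N HN].
  assert (Hnn : forall i, 0 <= hypcoef a b c i) by (intro; left; apply hypcoef_pos).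
  exists (sum_f_R0 (hypcoef a b c) N). intro n.
  rewrite Rabs_pos_eq by apply Hnn.
  induction n as [|n IH]; [apply sum_f_R0_ge_term; auto; lia |].
  destruct (le_lt_dec (S n) N) as [Hle | Hgt]; [apply sum_f_R0_ge_term; auto |].
  assert (Hratio : (a + INR n) * (b + INR n) / ((c + INR n) * INR (S n)) <= 1).
  { assert (INR N <= INR n) by (apply le_INR; lia).
    rewrite S_INR. generalize (pos_INR n); intro.
    apply Rle_div_l; [nra |]. nra. }
  rewrite hypcoef_S. generalize (Hnn n). nra.
Qed.

End Coefficients.

Lemma CV_radius_hypcoef (a b c x : R) :
  0 < a -> 0 < b -> a + b <= c -> Rabs x < 1 ->
  Rbar_lt (Rabs x) (CV_radius (hypcoef a b c)).
Proof.
  intros ha hb habc Hx.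
  destruct (hypcoef_bounded a b c ha hb ltac:(lra) habc) as [M HM].
  exact (CV_radius_bounded_gt _ M x HM Hx).
Qed.

Lemma hypcoef_succ_bottom (a b c : R) (n : nat) : 0 < c ->
  hypcoef a b (c + 1) n = hypcoef a b c n * (c / (c + INR n)).
Proof.
  intro hc. unfold hypcoef.
  generalize (poch_pos c n hc) (lt_0_INR _ (lt_O_fact n)) (pos_INR n); intros.
  replace (poch (c + 1) n) with (poch c n * (c + INR n) / c)
    by (rewrite <- poch_shift; field; lra).
  field. repeat split; lra.
Qed.

Lemma kernel_sum_le_2 (s p I J : R) : 0 < p <= s -> 0 <= I -> 0 <= J ->
  p * (I + 1 - J) / (s + I) + p * (J + 1 - I) / (s + J) <= 2.
Proof.
  intros Hps HI HJ.
  replace (p * (I + 1 - J) / (s + I) + p * (J + 1 - I) / (s + J))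
    with (p * (2 * s + I + J - (I - J) ^ 2) / ((s + I) * (s + J)))
    by (field; lra).
  apply Rle_div_l; [nra |].
  assert (0 <= p * (I - J) ^ 2) by (apply Rmult_le_pos; [lra | apply pow2_ge_0]).
  nra.
Qed.

Section Gauss.
Variables c d : R.
Hypotheses (hc : 0 < c) (hd : 0 < d).

Local Notation A := (hypcoef c d (c + d)).
Local Notation B := (hypcoef c d (c + d + 1)).
Local Notation q := (c * d / (c + d)).

Let radius_A (x : R) : Rabs x < 1 -> Rbar_lt (Rabs x) (CV_radius A).
Proof. apply CV_radius_hypcoef; lra. Qed.

Let radius_B (x : R) : Rabs x < 1 -> Rbar_lt (Rabs x) (CV_radius B).
Proof. apply CV_radius_hypcoef; lra. Qed.

Lemma hypcoef_contiguous (n : nat) : INR (S n) * A (S n) = INR n * A n + q * B n.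
Proof.
  rewrite hypcoef_S, hypcoef_succ_bottom by lra.
  rewrite S_INR. generalize (pos_INR n). intro. field. lra.
Qed.

Lemma PSeries_hypcoef_contiguous (x : R) : Rabs x < 1 ->
  (1 - x) * PSeries (PS_derive A) x = q * PSeries B x.
Proof.
  intro Hx.
  assert (Hex : ex_pseries (PS_derive A) x) by (apply ex_pseries_derive, radius_A, Hx).
  assert (Hex1 : ex_pseries (PS_incr_1 (PS_derive A)) x).
  { apply CV_radius_inside. rewrite CV_radius_incr_1, CV_radius_derive. apply radius_A, Hx. }
  rewrite Rmult_minus_distr_r, Rmult_1_l, <- PSeries_incr_1, <- PSeries_minus by assumption.
  rewrite <- PSeries_scal. apply PSeries_ext. intro n.
  unfold PS_minus, PS_scal. rewrite PS_incr_1_derive.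
  change (INR (S n) * A (S n) - INR n * A n = q * B n).
  rewrite hypcoef_contiguous. ring.
Qed.

(* [PSeries (PS_incr_1 B) x = x E(x)], written so that its derivative is again a power series. *)
Definition hslope (x : R) : R := 1 - x + q * (PSeries (PS_incr_1 B) x / PSeries A x).

Definition hslope_deriv (x : R) : R :=
  -1 + q * ((PSeries (PS_derive (PS_incr_1 B)) x * PSeries A x
             - PSeries (PS_incr_1 B) x * PSeries (PS_derive A) x)
            / (PSeries A x * PSeries A x)).

Lemma hslope_deriv_numerator_le (x : R) : c * d <= c + d -> 0 <= x < 1 ->
  q * (PSeries (PS_derive (PS_incr_1 B)) x * PSeries A x
       - PSeries B x * PSeries (PS_incr_1 (PS_derive A)) x)
  <= PSeries A x * PSeries A x.
Proof.
  intros Hcd Hx.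
  assert (Hx1 : Rabs x < 1) by (rewrite Rabs_pos_eq; lra).
  assert (RA := radius_A x Hx1). assert (RB := radius_B x Hx1).
  assert (RP : Rbar_lt (Rabs x) (CV_radius (PS_derive (PS_incr_1 B))))
    by (rewrite CV_radius_derive, CV_radius_incr_1; exact RB).
  assert (RQ : Rbar_lt (Rabs x) (CV_radius (PS_incr_1 (PS_derive A))))
    by (rewrite CV_radius_incr_1, CV_radius_derive; exact RA).
  rewrite <- !PSeries_mult by assumption.
  set (M1 := PS_mult (PS_derive (PS_incr_1 B)) A).
  set (M2 := PS_mult B (PS_incr_1 (PS_derive A))).
  assert (E1 : ex_pseries M1 x) by (apply ex_pseries_mult; assumption).
  assert (E2 : ex_pseries M2 x) by (apply ex_pseries_mult; assumption).
  assert (EA : ex_pseries (PS_mult A A) x) by (apply ex_pseries_mult; assumption).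
  assert (ES : ex_pseries (PS_scal q (PS_minus M1 M2)) x).
  { apply ex_pseries_scal; [apply Rmult_comm | apply ex_pseries_minus; assumption]. }
  rewrite <- PSeries_minus, <- PSeries_scal by assumption.
  apply Rminus_le_0. rewrite <- PSeries_minus by assumption.
  apply PSeries_nonneg; [intro n | lra | apply ex_pseries_minus; assumption].
  set (T := fun i j => A i * A j * (c * d * (INR i + 1 - INR j) / (c + d + INR i) - 1)).
  assert (Hcoef : sum_f_R0 (fun k => T k (n - k)%nat) n = q * (M1 n - M2 n) - PS_mult A A n).
  { unfold M1, M2, PS_mult. rewrite <- minus_sum, scal_sum, <- minus_sum.
    apply sum_eq. intros k _. unfold T.
    rewrite PS_incr_1_derive. unfold PS_derive. simpl PS_incr_1.
    rewrite !hypcoef_succ_bottom by lra.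
    generalize (pos_INR k); intro. rewrite S_INR. field. lra. }
  assert (Hsign : sum_f_R0 (fun k => T k (n - k)%nat) n <= 0).
  { apply sum_antidiagonal_nonpos. intros i j. unfold T.
    assert (0 <= A i * A j)
      by (apply Rmult_le_pos; left; apply hypcoef_pos; lra).
    assert (K := kernel_sum_le_2 (c + d) (c * d) (INR i) (INR j)
                   ltac:(split; nra) (pos_INR i) (pos_INR j)).
    nra. }
  cbn -[PS_mult M1 M2]. lra.
Qed.

Lemma PSeries_hypcoef_ge_1 (x : R) : 0 <= x < 1 -> 1 <= PSeries A x.
Proof.
  intro Hx. rewrite <- (hypcoef_0 c d (c + d)).
  apply PSeries_ge_head; [intro n; left; apply hypcoef_pos; lra | lra |].
  apply radius_A. rewrite Rabs_pos_eq; lra.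
Qed.

Definition logG (u : R) : R := ln (logistic u * PSeries A (logistic u)).

Lemma is_derive_logG (u : R) : is_derive logG u (hslope (logistic u)).
Proof.
  destruct (logistic_bounds u) as [Hx0 Hx1].
  assert (Hr : Rabs (logistic u) < 1) by (rewrite Rabs_pos_eq; lra).
  assert (HF := PSeries_hypcoef_ge_1 (logistic u) ltac:(lra)).
  assert (HD : Derive (PSeries A) (logistic u) = q * PSeries B (logistic u) / (1 - logistic u)).
  { rewrite Derive_PSeries by apply radius_A, Hr.
    rewrite <- PSeries_hypcoef_contiguous by exact Hr. field. lra. }
  assert (He := exp_pos u).
  unfold logG, hslope. rewrite PSeries_incr_1. unfold logistic in *.
  auto_derive.
  - repeat split; try lra.
    + apply ex_derive_PSeries, radius_A, Hr.
    + apply Rmult_lt_0_compat; [exact Hx0 | lra].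
  - change (fun x => PSeries A x) with (PSeries A).
    change (exp u * / (1 + exp u)) with (exp u / (1 + exp u)).
    rewrite HD. field. repeat split; lra.
Qed.

Lemma is_derive_hslope (x : R) : 0 <= x < 1 -> is_derive hslope x (hslope_deriv x).
Proof.
  intro Hx.
  assert (Hr : Rabs x < 1) by (rewrite Rabs_pos_eq; lra).
  assert (HrN : Rbar_lt (Rabs x) (CV_radius (PS_incr_1 B)))
    by (rewrite CV_radius_incr_1; apply radius_B, Hr).
  assert (HF := PSeries_hypcoef_ge_1 x Hx).
  unfold hslope. auto_derive.
  - repeat split; [apply ex_derive_PSeries, HrN | apply ex_derive_PSeries, radius_A, Hr | lra].
  - change (fun y => PSeries (PS_incr_1 B) y) with (PSeries (PS_incr_1 B)).
    change (fun y => PSeries A y) with (PSeries A).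
    rewrite !Derive_PSeries by (apply radius_A, Hr || exact HrN).
    unfold hslope_deriv. field. lra.
Qed.

Lemma hslope_deriv_nonpos (x : R) : c * d <= c + d -> 0 <= x < 1 -> hslope_deriv x <= 0.
Proof.
  intros Hcd Hx.
  assert (HF := PSeries_hypcoef_ge_1 x Hx).
  assert (K := hslope_deriv_numerator_le x Hcd Hx).
  unfold hslope_deriv. rewrite PSeries_incr_1 in *.
  enough (q * (PSeries (PS_derive (PS_incr_1 B)) x * PSeries A x
               - x * PSeries B x * PSeries (PS_derive A) x)
          / (PSeries A x * PSeries A x) <= 1) by (unfold Rdiv in *; lra).
  apply Rle_div_l; [nra |]. lra.
Qed.

Lemma hslope_antitone (x y : R) :
  c * d <= c + d -> 0 < x -> x < y -> y < 1 -> hslope y <= hslope x.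
Proof.
  intros Hcd Hx Hxy Hy.
  destruct (MVT_cor2 hslope hslope_deriv x y Hxy) as [z [Heq Hz]].
  { intros z Hz. apply is_derive_Reals, is_derive_hslope. lra. }
  assert (hslope_deriv z <= 0) by (apply hslope_deriv_nonpos; lra).
  nra.
Qed.

Lemma hslope_rises : c + d < c * d -> exists x y, 0 < x < y /\ y < 1 /\ hslope x < hslope y.
Proof.
  intro Hcd.
  assert (H0 : Rabs 0 < 1) by (rewrite Rabs_R0; lra).
  destruct (rises_near_0 (fun z => PSeries B z / PSeries A z) q)
    as (x & y & Hxy & Hy & Hlt).
  - apply continuity_pt_div.
    + apply PSeries_continuity, radius_B, H0.
    + apply PSeries_continuity, radius_A, H0.
    + rewrite PSeries_0, hypcoef_0. lra.
  - rewrite !PSeries_0, !hypcoef_0. field.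
  - apply Rlt_div_r; lra.
  - exists x, y. split; [exact Hxy | split; [exact Hy |]].
    unfold hslope. rewrite !PSeries_incr_1.
    unfold Rdiv in *. rewrite !Rmult_assoc in *. exact Hlt.
Qed.

End Gauss.

Lemma concave_logG (c d : R) : 0 < c -> 0 < d -> c * d <= c + d -> concave_on_R (logG c d).
Proof.
  intros hc hd Hcd.
  apply (concave_on_R_of_deriv_antitone _ (fun u => hslope c d (logistic u))).
  - apply is_derive_logG; assumption.
  - intros u v Huv. destruct (logistic_bounds u), (logistic_bounds v).
    apply hslope_antitone; try assumption. apply logistic_lt, Huv.
Qed.

Lemma not_concave_logG (c d : R) : 0 < c -> 0 < d -> c + d < c * d -> ~ concave_on_R (logG c d).
Proof.
  intros hc hd Hcd Hconc.
  destruct (hslope_rises c d hc hd Hcd) as (x & y & Hxy & Hy & Hlt).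
  set (u := ln (x / (1 - x))). set (v := ln (y / (1 - y))).
  assert (Hu : logistic u = x) by (apply logistic_logit; lra).
  assert (Hv : logistic v = y) by (apply logistic_logit; lra).
  assert (Huv : u < v) by (apply logistic_lt_inv; lra).
  assert (H := deriv_antitone_of_concave _ u v _ _ Hconc
                 (is_derive_logG c d hc hd u) (is_derive_logG c d hc hd v) Huv).
  rewrite Hu, Hv in H. lra.
Qed.

Theorem mainTheorem5 (c d : R) (hc : 0 < c) (hd : 0 < d) :
  let g := fun x : R => x * hyp2F1 c d (c + d) x in
  let G := fun u : R => ln (g (exp u / (1 + exp u))) in
  concave_on_R G <-> 1 / c + 1 / d >= 1.
Proof.
  intros g G.
  assert (HG : G = logG c d).
  { apply functional_extensionality. intro u. unfold G, g, logG. fold (logistic u).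
    destruct (logistic_bounds u).
    rewrite hyp2F1_PSeries; [reflexivity |].
    apply CV_radius_hypcoef; try lra. rewrite Rabs_pos_eq; lra. }
  assert (Hcd : 1 / c + 1 / d >= 1 <-> c * d <= c + d).
  { replace (1 / c + 1 / d) with ((c + d) / (c * d)) by (field; lra).
    assert (Hpos : c * d > 0) by nra.
    split; intro H.
    - apply Rge_le, (Rle_div_r 1 (c + d) (c * d) Hpos) in H. lra.
    - apply Rle_ge, (Rle_div_r 1 (c + d) (c * d) Hpos). lra. }
  rewrite HG, Hcd. split.
  - intro Hconc. apply Rnot_lt_le. intro Hlt.
    exact (not_concave_logG c d hc hd Hlt Hconc).
  - apply concave_logG; assumption.
Qed.
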